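(* In the two-parallel-path setting with the linear decision rule, suppose $l_v=0$ for all vertices, $m<n$, all initial pheromone levels are positive, $f_s(t)=\lambda^tf_s(0)$ and $b_d(t)=\lambda^tb_d(0)$ with $\lambda>1$ and $f_s(0),b_d(0)>0$, and the initial flows at vertices other than $s,d$ satisfy $f_v(0)\le f_s(0)$, $b_v(0)\le b_d(0)$. Let $T_1=\max_{(u,v)\in E}\log(p_{uv}(0)/(f_s(0)+b_d(0)))/\log(1/\delta)$. Then for every integer $t\ge L+\max(0,T_1)$, $$r_{\min}(t+L)\ \ge\ \left(1+\frac{\min(f_s(0),b_d(0))\,(1-\delta)(\lambda-1)}{6\,(f_s(0)+b_d(0))\,\lambda^{m}}\right)r_{\min}(t).$$
   Context: Model (linear decision rule). Directed graph $G=(V,E)$, source $s$, destination $d$, discrete time; pheromone $p_{uv}(t)$, forward flows $f_v(t)$, backward flows $b_v(t)$; leakages $l_v\in[0,1]$; decay $\delta\in(0,1)$; exogenous inputs $f_s(t),b_d(t)$. Edge flows: $f_{uv}(t)=f_u(t)p_{uv}(t)/\sum_{z:(u,z)\in E}p_{uz}(t)$, $b_{uv}(t)=b_v(t)p_{uv}(t)/\sum_{z:(z,v)\in E}p_{zv}(t)$ (at a vertex with a single outgoing, resp. incoming, edge the whole flow goes along it). Updates: $f_v(t+1)=(1-l_v)\sum_{z:(z,v)\in E}f_{zv}(t)$ for $v\neq s$, $b_u(t+1)=(1-l_u)\sum_{z:(u,z)\in E}b_{uz}(t)$ for $u\ne d$, $p_{uv}(t+1)=\delta(p_{uv}(t)+f_{uv}(t)+b_{uv}(t))$.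 Two parallel paths: $G$ is the union of directed paths $P_1,P_2$ from $s$ to $d$ sharing only $s,d$; $s_1,s_2$ are the successors of $s$ and $d_1,d_2$ the predecessors of $d$ on $P_1,P_2$; $m=\mathrm{len}(P_1)$, $n=\mathrm{len}(P_2)$ (numbers of edges), $L=\max(m,n)$. Potential: $r_{ss_1}(t)=p_{ss_1}(t)/p_{ss_2}(t)$, $r_{d_1d}(t)=p_{d_1d}(t)/p_{d_2d}(t)$, and for $t\ge L$, $r_{\min}(t)=\min\{r_{ss_1}(t-i),\,r_{d_1d}(t-i):0\le i\le L-1\}$. *)

From HB Require Import structures.
From mathcomp Require Import all_boot all_order all_algebra.
From mathcomp Require Import reals exp.
Set Implicit Arguments. Unset Strict Implicit. Unset Printing Implicit Defensive.
Import Order.TTheory GRing.Theory Num.Theory.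
Local Open Scope ring_scope.

Section Model.
Variables (R : realType) (V : finType) (E : rel V).

Definition out_sum (p : V -> V -> R) (u : V) : R := \sum_(z | E u z) p u z.
Definition in_sum (p : V -> V -> R) (v : V) : R := \sum_(z | E z v) p z v.

Definition fwd_edge_flow (p : V -> V -> R) (f : V -> R) (u v : V) : R :=
  if #|[pred z | E u z]| == 1%N then f u else f u * p u v / out_sum p u.

Definition bwd_edge_flow (p : V -> V -> R) (b : V -> R) (u v : V) : R :=
  if #|[pred z | E z v]| == 1%N then b v else b v * p u v / in_sum p v.

(* The exogenous inputs f_s(t),
   b_d(t) are the values f t s, b t d (not constrained by the update rules). *)
Definition is_trajectory (s d : V) (l : V -> R) (delta : R)
    (p : nat -> V -> V -> R) (f b : nat -> V -> R) : Prop :=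
  [/\ forall t v, v != s ->
        f t.+1 v = (1 - l v) * \sum_(z | E z v) fwd_edge_flow (p t) (f t) z v,
      forall t u, u != d ->
        b t.+1 u = (1 - l u) * \sum_(z | E u z) bwd_edge_flow (p t) (b t) u z
    & forall t u v, E u v ->
        p t.+1 u v = delta * (p t u v + fwd_edge_flow (p t) (f t) u v
                                      + bwd_edge_flow (p t) (b t) u v)].

Definition path_edge (q : seq V) (x y : V) : bool := (x, y) \in zip q (behead q).

Definition two_parallel_paths (s d : V) (p1 p2 : seq V) : Prop :=
  [/\ s != d,
      [/\ head d p1 = s, last s p1 = d & uniq p1],
      [/\ head d p2 = s, last s p2 = d & uniq p2],
      (forall x, x \in p1 -> x \in p2 -> x = s \/ x = d)
    & (forall v, v \in p1 \/ v \in p2)] /\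
  (forall x y, E x y = path_edge p1 x y || path_edge p2 x y).

Definition r_ratio (p : nat -> V -> V -> R) (a x y : V) (t : nat) : R :=
  p t a x / p t a y.
Definition r_ratio_d (p : nat -> V -> V -> R) (x y c : V) (t : nat) : R :=
  p t x c / p t y c.

(* r_min(t) = min { r_{ss1}(t-i), r_{d1d}(t-i) : 0 <= i <= L-1 } (used for t >= L). *)
Definition r_min (p : nat -> V -> V -> R) (s d s1 s2 d1 d2 : V) (L t : nat) : R :=
  \big[Num.min/r_ratio p s s1 s2 t]_(i < L)
     Num.min (r_ratio p s s1 s2 (t - i)) (r_ratio_d p d1 d2 d (t - i)).

Definition T1_pos (p0 : V -> V -> R) (fs0 bd0 delta : R) : R :=
  \big[Num.max/0]_(e : V * V | E e.1 e.2) (ln (p0 e.1 e.2 / (fs0 + bd0)) / ln delta^-1).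

End Model.

From HB Require Import structures.
From mathcomp Require Import all_boot all_order all_algebra.
From mathcomp Require Import reals exp.
From mathcomp Require Import zify ring lra.
Set Implicit Arguments. Unset Strict Implicit. Unset Printing Implicit Defensive.
Import Order.TTheory GRing.Theory Num.Theory.
Local Open Scope ring_scope.

(* In a graph made of two parallel paths every
     interior vertex has one in- and one out-edge, while s and d have one edge
     on each branch; so an interior vertex sends its whole flow along its
     edge and s, d split theirs in proportion to the pheromone.
   - Dynamics on a branch: without leakage ants advance one edge per step,
     so the backward flow reaching s along a branch of length N left d N - 1
     steps earlier (bwd_transport).  By induction, pheromones stay positive
     and all flows at time k are bounded by lambda^k times the initial inputs
     (regime_bounded); after time T1 the pheromone on the source edges is
     O(lambda^k) (decay_recursion_bound).
   - Step inequality (source_ratio_step): if both ratios are >= rho over the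
     last n times, the source ratio at the next time is >= rho (1 + gain),
     because backward ants reach s along the short branch from a later, hence
     larger, input (ratio_growth, gain_condition).  The destination version
     follows by duality: reverse all edges and exchange forward and backward
     ants (exp_regime_rev).
   - A window argument (window_min_growth) turns the step inequality into the
     growth of r_min, which is the theorem. *)

Section SeqPaths.
Variables (V : finType) (x0 : V).

Lemma path_edgeP (q : seq V) x y :
  path_edge q x y <->
  exists i, [/\ (i.+1 < size q)%N, x = nth x0 q i & y = nth x0 q i.+1].
Proof.
rewrite /path_edge; split.
  move/(nthP (x0, x0)) => [i Hi]; rewrite nth_zip_cond Hi => -[<- <-].
  exists i; rewrite size_zip size_behead in Hi; split => //; last by rewrite nth_behead.
  by move: Hi; case: (size q) => // k; rewrite minnE; lia.
move=> [i [Hi -> ->]]; have Hi' : (i < minn (size q) (size q).-1)%N.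
  by move: Hi; case: (size q) => // k; lia.
apply/(nthP (x0, x0)); exists i; first by rewrite size_zip size_behead.
by rewrite nth_zip_cond size_zip size_behead Hi' nth_behead.
Qed.

Lemma path_edge_nth (q : seq V) j :
  (j.+1 < size q)%N -> path_edge q (nth x0 q j) (nth x0 q j.+1).
Proof. by move=> hj; apply/path_edgeP; exists j. Qed.

Lemma path_edge_rev (q : seq V) x y : path_edge (rev q) x y = path_edge q y x.
Proof.
apply/idP/idP => /path_edgeP[i]; rewrite ?size_rev => -[hi -> ->];
  apply/path_edgeP; exists (size q - i.+2)%N; rewrite ?size_rev.
  by rewrite !nth_rev; [split; [lia | congr nth; lia | congr nth; lia] | lia | lia].
by rewrite !nth_rev; [split; [lia | congr nth; lia | congr nth; lia] | lia | lia].
Qed.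

Definition simple_path (s d : V) (q : seq V) : Prop :=
  [/\ head d q = s, last s q = d & uniq q].

Lemma simple_path_rev s d q : simple_path s d q -> simple_path d s (rev q).
Proof.
have head_rev x r : head x (rev r) = last x r.
  by case/lastP: r => [|r y] //; rewrite rev_rcons last_rcons.
have last_rev x r : last x (rev r) = head x r.
  by case: r => [|y r] //; rewrite rev_cons last_rcons.
by move=> [hh hl hu]; split; rewrite ?head_rev ?last_rev ?rev_uniq.
Qed.

End SeqPaths.

Lemma path_edge_mem (V : finType) (q : seq V) x y :
  path_edge q x y -> x \in q /\ y \in q.
Proof. by move/(path_edgeP x)=> [i [hi -> ->]]; split; apply: mem_nth => //; apply: ltnW. Qed.

Section SimplePath.
Variables (V : finType) (s d : V) (q : seq V).
Hypotheses (sd : s != d) (hq : simple_path s d q).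
Local Notation N := (size q).-1.
Local Notation a j := (nth s q j).

Lemma simple_path_size : (1 < size q)%N.
Proof.
case: hq => hh hl _; move: sd.
case: q hh hl => [|x [|y r]] //= hh hl.
  by rewrite hl eqxx.
by rewrite -hh hl eqxx.
Qed.

Lemma nth_path_first : a 0 = s.
Proof. by case: hq; case: q simple_path_size => [|x r] //= _ ->. Qed.

Lemma nth_path_last : a N = d.
Proof. by case: hq => _ hl _; rewrite nth_last. Qed.

Lemma nth_path_inj i j : a i = a j -> (i <= N)%N -> (j <= N)%N -> i = j.
Proof.
have lt_size k : (k <= N)%N -> (k < size q)%N by have := simple_path_size; lia.
case: hq => _ _ hu e hi hj.
by apply/eqP; rewrite -(nth_uniq s _ _ hu) ?e ?lt_size.
Qed.

Lemma nth_in_path i : (i <= N)%N -> a i \in q.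
Proof.
move=> hi; have hi' : (i < size q)%N by have := simple_path_size; lia.
exact: mem_nth.
Qed.

Lemma interior_ne_ends j : (0 < j < N)%N -> a j != s /\ a j != d.
Proof.
have := simple_path_size => hs hj; split; apply/eqP => e.
  by have := @nth_path_inj j 0; rewrite e nth_path_first => /(_ erefl); lia.
by have := @nth_path_inj j N; rewrite e nth_path_last => /(_ erefl); lia.
Qed.

Lemma path_edge_src z : path_edge q s z = (z == a 1).
Proof.
have := simple_path_size => hs; apply/idP/eqP => [/(path_edgeP s)[i [hi e ->]]|->].
  by have -> : i = 0%N by apply: nth_path_inj; [rewrite nth_path_first -e | lia | lia].
by apply/(path_edgeP s); exists 0%N; rewrite nth_path_first.
Qed.

Lemma path_edge_dst z : path_edge q z d = (z == a N.-1).
Proof.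
have := simple_path_size => hs; apply/idP/eqP => [/(path_edgeP s)[i [hi -> e]]|->].
  have := @nth_path_inj i.+1 N; rewrite nth_path_last -e => /(_ erefl) hi1.
  by have -> : i = N.-1 by lia.
apply/(path_edgeP s); exists N.-1; split; [lia | by [] |].
by rewrite -nth_path_last; congr nth; lia.
Qed.

Lemma path_edge_to j z : (0 < j < N)%N -> path_edge q z (a j) = (z == a j.-1).
Proof.
have := simple_path_size => hs hj; apply/idP/eqP => [/(path_edgeP s)[i [hi -> e]]|->].
  by have -> : j = i.+1 by apply: nth_path_inj; [| lia | lia].
by apply/(path_edgeP s); exists j.-1; split; [lia | by [] | congr nth; lia].
Qed.

Lemma path_edge_from j z : (0 < j < N)%N -> path_edge q (a j) z = (z == a j.+1).
Proof.
have := simple_path_size => hs hj; apply/idP/eqP => [/(path_edgeP s)[i [hi e ->]]|->].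
  by have -> : j = i by apply: nth_path_inj; [| lia | lia].
by apply/(path_edgeP s); exists j; split => //; lia.
Qed.

Lemma nth_rev_path i : (i <= N)%N -> nth d (rev q) i = a (N - i).
Proof.
have := simple_path_size => hs hi.
by rewrite nth_rev; [rewrite (set_nth_default s); [congr nth|]|]; lia.
Qed.

End SimplePath.

Lemma two_parallel_paths_sym (V : finType) (E : rel V) s d q q' :
  two_parallel_paths E s d q q' -> two_parallel_paths E s d q' q.
Proof.
move=> [[sd hq hq' hsh hcov] hE]; split; last by move=> x y; rewrite hE orbC.
by split=> // [x h' h|v]; [apply: hsh | case: (hcov v); [right|left]].
Qed.

Lemma two_parallel_paths_rev (V : finType) (E : rel V) s d q q' :
  two_parallel_paths E s d q q' ->
  two_parallel_paths (fun x y => E y x) d s (rev q) (rev q').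
Proof.
move=> [[sd hq hq' hsh hcov] hE]; split; last by move=> x y; rewrite hE !path_edge_rev.
split; [by rewrite eq_sym | exact: simple_path_rev | exact: simple_path_rev | |].
  by move=> x; rewrite !mem_rev => h h'; case: (hsh x h h'); [right|left].
by move=> v; rewrite !mem_rev.
Qed.

Lemma sum_pred2 (R : nmodType) (V : finType) (F : V -> R) (P : pred V) x y :
  x != y -> P =1 [pred z | (z == x) || (z == y)] ->
  \sum_(z | P z) F z = F x + F y.
Proof.
move=> xy hP; rewrite (bigD1 x) /=; last by rewrite hP /= eqxx.
congr (_ + _).
apply: big_pred1 => z /=; rewrite hP /=.
by case: (eqVneq z x) => [->|]; rewrite ?(negbTE xy) ?andbT.
Qed.

Lemma card_pred2 (V : finType) (P : pred V) x y :
  x != y -> P =1 [pred z | (z == x) || (z == y)] -> #|[pred z | P z]| = 2%N.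
Proof.
move=> xy hP; have -> : 2%N = (x != y).+1 by rewrite xy.
by rewrite -card2; apply: eq_card => z; rewrite !inE hP.
Qed.

Section TwoPaths.
Variables (V : finType) (E : rel V) (s d : V) (q q' : seq V).
Hypothesis G : two_parallel_paths E s d q q'.
Local Notation N := (size q).-1.
Local Notation N' := (size q').-1.
Local Notation a j := (nth s q j).
Local Notation c j := (nth s q' j).

Lemma tpp_neq : s != d. Proof. by case: G => -[]. Qed.
Lemma tpp_path : simple_path s d q. Proof. by case: G => -[]. Qed.
Lemma tpp_path' : simple_path s d q'. Proof. by case: G => -[]. Qed.
Local Notation sd := tpp_neq.
Local Notation hq := tpp_path.
Local Notation hq' := tpp_path'.

Lemma tpp_size : (1 < size q)%N. Proof. exact: simple_path_size sd hq. Qed.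

Lemma interior_notin j : (0 < j < N)%N -> a j \notin q'.
Proof.
move=> hj; apply/negP => hin; have [ns nd] := interior_ne_ends sd hq hj.
have hm : a j \in q by apply: (nth_in_path sd hq); lia.
by case: G => -[_ _ _ hsh _] _; case: (hsh _ hm hin) => e; rewrite e eqxx in ns nd.
Qed.

Lemma E_edge x y : E x y = path_edge q x y || path_edge q' x y.
Proof. by case: G. Qed.

Lemma E_to_interior j z : (0 < j < N)%N -> E z (a j) = (z == a j.-1).
Proof.
move=> hj; rewrite E_edge (path_edge_to sd hq z hj).
case: (boolP (path_edge q' z (a j))) => [/path_edge_mem [_ hin]|]; last by rewrite orbF.
by move: (interior_notin hj); rewrite hin.
Qed.

Lemma E_from_interior j z : (0 < j < N)%N -> E (a j) z = (z == a j.+1).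
Proof.
move=> hj; rewrite E_edge (path_edge_from sd hq z hj).
case: (boolP (path_edge q' (a j) z)) => [/path_edge_mem [hin _]|]; last by rewrite orbF.
by move: (interior_notin hj); rewrite hin.
Qed.

Lemma E_from_src z : E s z = (z == a 1) || (z == c 1).
Proof. by rewrite E_edge (path_edge_src sd hq) (path_edge_src sd hq'). Qed.

Lemma E_to_dst z : E z d = (z == a N.-1) || (z == c N'.-1).
Proof. by rewrite E_edge (path_edge_dst sd hq) (path_edge_dst sd hq'). Qed.

Lemma E_branch j : (j < N)%N -> E (a j) (a j.+1).
Proof. by move=> hj; rewrite E_edge path_edge_nth //; have := tpp_size; lia. Qed.

Lemma common_vertex i j : (i <= N)%N -> (j <= N')%N -> a i = c j ->
  (i = 0 /\ j = 0)%N \/ (i = N /\ j = N').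
Proof.
move=> hi hj e.
have m1 : a i \in q by exact: (nth_in_path sd hq).
have m2 : a i \in q' by rewrite e; exact: (nth_in_path sd hq').
case: G => -[_ _ _ hsh _] _; case: (hsh _ m1 m2) => e2; [left | right].
  have e0 : a i = a 0 by rewrite e2 (nth_path_first sd hq).
  have e0' : c j = c 0 by rewrite -e e2 (nth_path_first sd hq').
  by split; [apply: (nth_path_inj sd hq e0) | apply: (nth_path_inj sd hq' e0')].
have eN : a i = a N by rewrite e2 (nth_path_last hq).
have eN' : c j = c N' by rewrite -e e2 (nth_path_last hq').
by split; [apply: (nth_path_inj sd hq eN) | apply: (nth_path_inj sd hq' eN')].
Qed.

Hypothesis nontrivial : (1 < N)%N \/ (1 < N')%N.

Lemma src_nbrs_neq : a 1 != c 1.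
Proof.
have := tpp_size; have := simple_path_size sd hq' => h' h.
have h1 : (1 <= N)%N by lia.
have h1' : (1 <= N')%N by lia.
by apply/eqP => /(common_vertex h1 h1'); lia.
Qed.

Lemma dst_nbrs_neq : a N.-1 != c N'.-1.
Proof.
have := tpp_size; have := simple_path_size sd hq' => h' h.
have h1 : (N.-1 <= N)%N by lia.
have h1' : (N'.-1 <= N')%N by lia.
by apply/eqP => /(common_vertex h1 h1'); lia.
Qed.

Variable R : realType.

Lemma fwd_flow_interior (P : V -> V -> R) (F : V -> R) j y : (0 < j < N)%N ->
  fwd_edge_flow E P F (a j) y = F (a j).
Proof.
move=> hj; rewrite /fwd_edge_flow (_ : #|_| = 1%N) //.
by rewrite -(card1 (a j.+1)); apply: eq_card => z; rewrite inE E_from_interior.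
Qed.

Lemma bwd_flow_interior (P : V -> V -> R) (B : V -> R) j x : (0 < j < N)%N ->
  bwd_edge_flow E P B x (a j) = B (a j).
Proof.
move=> hj; rewrite /bwd_edge_flow (_ : #|_| = 1%N) //.
by rewrite -(card1 (a j.-1)); apply: eq_card => z; rewrite inE E_to_interior.
Qed.

Lemma fwd_flow_src (P : V -> V -> R) (F : V -> R) y :
  fwd_edge_flow E P F s y = F s * P s y / (P s (a 1) + P s (c 1)).
Proof.
rewrite /fwd_edge_flow (card_pred2 src_nbrs_neq E_from_src) /out_sum.
by rewrite (sum_pred2 _ src_nbrs_neq E_from_src).
Qed.

Lemma bwd_flow_dst (P : V -> V -> R) (B : V -> R) x :
  bwd_edge_flow E P B x d = B d * P x d / (P (a N.-1) d + P (c N'.-1) d).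
Proof.
rewrite /bwd_edge_flow (card_pred2 dst_nbrs_neq (P := fun z => E z d) E_to_dst).
by rewrite /in_sum (sum_pred2 (fun z => P z d) dst_nbrs_neq E_to_dst).
Qed.

End TwoPaths.

Lemma share_bound (R : realFieldType) (F A x y : R) : 0 <= F <= A -> 0 < x -> 0 < y ->
  0 <= F * x / (x + y) <= A.
Proof.
move=> /andP[F0 FA] x0 y0; have xy0 : 0 < x + y by rewrite addr_gt0.
apply/andP; split; first by rewrite !mulr_ge0 ?invr_ge0 // ltW.
rewrite ler_pdivrMr //; apply: le_trans (_ : A * x <= _); first by rewrite ler_pM2r.
by rewrite ler_wpM2l ?(le_trans F0) //; lra.
Qed.

Section BranchDynamics.
Variables (R : realType) (V : finType) (E : rel V) (s d : V) (q q' : seq V)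
  (l : V -> R) (delta : R) (p : nat -> V -> V -> R) (f b : nat -> V -> R).
Hypotheses (G : two_parallel_paths E s d q q')
  (nontrivial : (1 < (size q).-1)%N \/ (1 < (size q').-1)%N)
  (htr : is_trajectory E s d l delta p f b) (no_leak : forall v, l v = 0).
Local Notation N := (size q).-1.
Local Notation N' := (size q').-1.
Local Notation a j := (nth s q j).
Local Notation c j := (nth s q' j).
Local Notation FA j k := (fwd_edge_flow E (p k) (f k) (a j) (a j.+1)).
Local Notation BA j k := (bwd_edge_flow E (p k) (b k) (a j) (a j.+1)).

Lemma pher_update j k : (j < N)%N ->
  p k.+1 (a j) (a j.+1) = delta * (p k (a j) (a j.+1) + FA j k + BA j k).
Proof. by move=> hj; case: htr => _ _ -> //; apply: (E_branch G). Qed.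

Lemma fwd_update j k : (0 < j < N)%N -> f k.+1 (a j) = FA j.-1 k.
Proof.
move=> hj; have [ns _] := interior_ne_ends (tpp_neq G) (tpp_path G) hj.
case: htr => -> // _ _; rewrite no_leak subr0 mul1r.
by rewrite (big_pred1 (a j.-1)) => [|z]; rewrite ?prednK ?(E_to_interior G) //; lia.
Qed.

Lemma bwd_update j k : (0 < j < N)%N -> b k.+1 (a j) = BA j k.
Proof.
move=> hj; have [_ nd] := interior_ne_ends (tpp_neq G) (tpp_path G) hj.
case: htr => _ -> // _; rewrite no_leak subr0 mul1r.
by rewrite (big_pred1 (a j.+1)) => [|z]; rewrite ?(E_from_interior G).
Qed.

Lemma fwd_flow_first k :
  FA 0 k = f k s * p k s (a 1) / (p k s (a 1) + p k s (c 1)).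
Proof. by rewrite (nth_path_first (tpp_neq G) (tpp_path G)) (fwd_flow_src G nontrivial). Qed.

Lemma bwd_flow_last k :
  BA N.-1 k = b k d * p k (a N.-1) d / (p k (a N.-1) d + p k (c N'.-1) d).
Proof.
have hs := tpp_size G; rewrite (_ : N.-1.+1 = N) ?(nth_path_last (tpp_path G)); last lia.
exact: (bwd_flow_dst G nontrivial).
Qed.

(* Without leakage, backward ants cross the interior of the branch one edge
   per step: the backward flow on the i-th edge before d at time k left d at
   time k - i. *)
Lemma bwd_transport i k : (i < N)%N -> (i <= k)%N ->
  BA (N.-1 - i) k = BA N.-1 (k - i).
Proof.
elim: i k => [|i IH] [|k] hi hk; rewrite ?subn0 //.
rewrite (bwd_flow_interior G); last lia.
by rewrite (_ : (N.-1 - i.+1).+1 = N.-1 - i)%N ?bwd_update ?IH //; lia.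
Qed.

Lemma first_edge_update k : (N.-1 <= k)%N ->
  p k.+1 s (a 1) = delta * (p k s (a 1)
    + f k s * p k s (a 1) / (p k s (a 1) + p k s (c 1))
    + b (k - N.-1)%N d * p (k - N.-1)%N (a N.-1) d
      / (p (k - N.-1)%N (a N.-1) d + p (k - N.-1)%N (c N'.-1) d)).
Proof.
move=> hk; have hs := tpp_size G.
have e := pher_update (j := 0%N) k (ltac:(lia)).
have eB := bwd_transport (i := N.-1) (ltac:(lia)) hk.
rewrite subnn bwd_flow_last in eB.
by rewrite fwd_flow_first eB (nth_path_first (tpp_neq G) (tpp_path G)) in e.
Qed.

Lemma edge_flow_bounds k (A B : R) :
  (forall j, (j < N)%N -> 0 < p k (a j) (a j.+1)) ->
  0 < p k s (c 1) -> 0 < p k (c N'.-1) d ->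
  (forall j, (0 < j < N)%N -> 0 <= f k (a j) <= A /\ 0 <= b k (a j) <= B) ->
  0 <= f k s <= A -> 0 <= b k d <= B ->
  forall j, (j < N)%N -> 0 <= FA j k <= A /\ 0 <= BA j k <= B.
Proof.
move=> hp hc1 hcN hn hfs hbd j hj; have hs := tpp_size G; split.
  case: j hj => [|j] hj; last by rewrite (fwd_flow_interior G); [case: (hn j.+1) | lia].
  rewrite fwd_flow_first; apply: share_bound => //.
  by have := hp 0%N; rewrite (nth_path_first (tpp_neq G) (tpp_path G)); apply; lia.
case: (ltnP j.+1 N) => hjN.
  by rewrite (bwd_flow_interior G) //; case: (hn j.+1); lia.
have -> : j = N.-1 by lia.
rewrite bwd_flow_last; apply: share_bound => //.
have hN : (N.-1 < N)%N by lia.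
by have := hp N.-1 hN; rewrite (_ : N.-1.+1 = N) ?(nth_path_last (tpp_path G)) //; lia.
Qed.

End BranchDynamics.

Section Decay.
Variable R : realType.

Lemma T1_pos_decay (V : finType) (E : rel V) (p0 : V -> V -> R) (fs0 bd0 delta : R)
    (k : nat) u v :
  0 < delta < 1 -> 0 < fs0 + bd0 -> 0 < p0 u v -> E u v ->
  T1_pos E p0 fs0 bd0 delta <= k%:R -> delta ^+ k * p0 u v <= fs0 + bd0.
Proof.
move=> /andP[d0 d1] c0 p00 Euv hT.
have g0 : 0 < ln delta^-1 by rewrite ln_gt0 // invf_gt1.
have dk : 0 < delta ^+ k by rewrite exprn_gt0.
have h : ln (p0 u v / (fs0 + bd0)) / ln delta^-1 <= k%:R.
  apply: le_trans hT; exact: (le_bigmax_cond _ (j := (u, v)) (P := fun e => E e.1 e.2)).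
rewrite ler_pdivrMr // mulr_natl -lnXn ?invr_gt0 // in h.
rewrite ler_ln ?posrE ?exprn_gt0 ?invr_gt0 ?divr_gt0 // exprVn ler_pdivrMr // in h.
by rewrite mulrC -ler_pdivlMr // mulrC.
Qed.

Lemma T1_pos_ge0 (V : finType) (E : rel V) (p0 : V -> V -> R) (fs0 bd0 delta : R) :
  0 <= T1_pos E p0 fs0 bd0 delta.
Proof. by rewrite /T1_pos; elim/big_rec: _ => // i x _ hx; rewrite le_max hx orbT. Qed.

End Decay.

Section RealInequalities.
Variable R : realFieldType.

Lemma decay_recursion_bound (X : nat -> R) (delta lambda C : R) :
  0 < delta < 1 -> 1 <= lambda -> 0 <= C ->
  (forall k, X k.+1 <= delta * (X k + C * lambda ^+ k)) ->
  forall k, X k <= delta ^+ k * X 0%N + C * lambda ^+ k * (delta / (1 - delta)).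
Proof.
move=> /andP[d0 d1] l1 C0 hX; set w := delta / (1 - delta).
have w0 : 0 <= w by rewrite /w divr_ge0 // ?subr_ge0 ltW.
have dw : delta * (w + 1) = w by rewrite /w; field; rewrite subr_eq0 gt_eqF.
elim=> [|k IH]; first by rewrite expr0 mul1r expr0 mulr1 lerDl mulr_ge0.
have u0 : 0 <= C * lambda ^+ k by rewrite mulr_ge0 // exprn_ge0 // (le_trans ler01).
apply: le_trans (hX k) _; apply: le_trans (_ : delta * (delta ^+ k * X 0%N
    + C * lambda ^+ k * w + C * lambda ^+ k) <= _).
  by apply: ler_wpM2l; [exact: ltW | lra].
have -> : delta * (delta ^+ k * X 0%N + C * lambda ^+ k * w + C * lambda ^+ k)
    = delta ^+ k.+1 * X 0%N + C * lambda ^+ k * (delta * (w + 1)) by rewrite exprS; ring.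
rewrite dw lerD2l exprS; apply: ler_wpM2r => //.
by rewrite mulrCA ler_peMl.
Qed.

Lemma share_lower (rho x y : R) : 0 < rho -> 0 < x -> 0 < y -> rho * y <= x ->
  rho / (1 + rho) <= x / (x + y).
Proof.
move=> r0 x0 y0 h.
by rewrite ler_pdivlMr ?addr_gt0 // mulrAC ler_pdivrMr ?addr_gt0 //; nra.
Qed.

Lemma share_upper (rho x y : R) : 0 < rho -> 0 < x -> 0 < y -> rho * y <= x ->
  y / (x + y) <= (1 + rho)^-1.
Proof.
move=> r0 x0 y0 h.
by rewrite ler_pdivrMr ?addr_gt0 // mulrC ler_pdivlMr ?addr_gt0 //; nra.
Qed.

(* The one-step growth inequality for a ratio of pheromone levels: the new
   numerator is the old one P1 plus the forward share of fs and a backward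
   input bA arriving favourably split (Q1 : Q2), the denominator gets the
   forward share and a smaller backward input bC <= bA / lam split at most
   evenly (R1 : R2). *)
Lemma ratio_growth (rho g lam P1 P2 fs Q1 Q2 R1 R2 bA bC : R) :
  0 < rho -> 0 <= g -> 1 < lam -> 0 < P1 -> 0 < P2 -> 0 <= fs ->
  0 < Q1 -> 0 < Q2 -> 0 < R1 -> 0 < R2 -> 0 <= bC -> lam * bC <= bA ->
  rho * P2 <= P1 -> rho * Q2 <= Q1 -> rho * R2 <= R1 ->
  g * (lam * (P1 + P2 + fs) + bA) <= (lam - 1) * bA ->
  rho * (1 + g) <= (P1 + fs * P1 / (P1 + P2) + bA * Q1 / (Q1 + Q2)) /
                   (P2 + fs * P2 / (P1 + P2) + bC * R2 / (R1 + R2)).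
Proof.
move=> r0 g0 l1 P10 P20 fs0 Q10 Q20 R10 R20 bC0 hb hP hQ hR hg.
have P0 : 0 < P1 + P2 by rewrite addr_gt0.
set z := (1 + rho)^-1; set S := P1 + P2 + fs; set h := 1 + fs / (P1 + P2).
have h1 : 1 <= h by rewrite lerDl divr_ge0 // ltW.
have eP1 : P1 + fs * P1 / (P1 + P2) = P1 * h by rewrite /h; field; exact: lt0r_neq0.
have eP2 : P2 + fs * P2 / (P1 + P2) = P2 * h by rewrite /h; field; exact: lt0r_neq0.
have hQz : rho * z <= Q1 / (Q1 + Q2) by exact: share_lower.
have hRz : R2 / (R1 + R2) <= z by exact: share_upper.
have hPz : P2 * h <= S * z.
  have -> : P2 * h = S * (P2 / (P1 + P2)) by rewrite /S /h; field; exact: lt0r_neq0.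
  by rewrite ler_wpM2l ?share_upper //; rewrite /S; lra.
(* The backward surplus pays for the gain:  g S + (1 + g) bC <= bA. *)
have hbal : g * S + (1 + g) * bC <= bA.
  rewrite -(ler_pM2l (lt_trans ltr01 l1)); have := ler_wpM2l (_ : 0 <= 1 + g) hb.
  by rewrite /S in hg *; nra.
have z0 : 0 < z by rewrite invr_gt0 addr_gt0.
have bR0 : 0 <= R2 / (R1 + R2) by rewrite divr_ge0 // ltW // addr_gt0.
rewrite eP1 eP2 -!mulrA ler_pdivlMr; last first.
  apply: (lt_le_trans (_ : 0 < P2 * h)); last by rewrite lerDl mulr_ge0.
  by rewrite mulr_gt0 // (lt_le_trans ltr01).
have hden : g * (P2 * h) + (1 + g) * (bC * (R2 / (R1 + R2))) <= z * bA.
  apply: le_trans (_ : z * (g * S + (1 + g) * bC) <= _).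
    2: by apply: ler_wpM2l => //; exact: ltW.
  have := ler_wpM2l g0 hPz; have := ler_wpM2l bC0 hRz; nra.
have bA0 : 0 <= bA by apply: le_trans hb; rewrite mulr_ge0 // ltW // (lt_trans ltr01).
have := ler_wpM2l (ltW r0) hden; have := ler_wpM2l (le_trans ler01 h1) hP.
have := ler_wpM2l bA0 hQz; move: (Q1 / _) (R2 / _) => x1 x2.
nra.
Qed.

Lemma gain_condition (delta lam cc M b0 S Lm mu g : R) :
  0 < delta < 1 -> 1 < lam -> 0 < cc -> 0 <= M -> M <= b0 -> b0 <= cc ->
  1 <= mu -> 0 < Lm -> lam * S * (1 - delta) <= 3%:R * cc * Lm * mu ->
  g = M * (1 - delta) * (lam - 1) / (6%:R * cc * mu) ->
  g * (lam * S + Lm * b0) <= (lam - 1) * (Lm * b0).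
Proof.
move=> /andP[d0 d1] l1 c0 M0 Mb bc mu1 L0 hS ->.
have mu0 : 0 < mu by apply: lt_le_trans mu1.
set K := M * (lam - 1) / (6%:R * cc * mu).
have K0 : 0 <= K.
  by apply: divr_ge0; [rewrite mulr_ge0 // subr_ge0 ltW | rewrite ltW // !mulr_gt0].
have -> : M * (1 - delta) * (lam - 1) / (6%:R * cc * mu) = K * (1 - delta).
  by rewrite /K; ring.
have hin : K * (1 - delta) * (lam * S) <= M * (lam - 1) * Lm / 2%:R.
  have -> : M * (lam - 1) * Lm / 2%:R = K * (3%:R * cc * Lm * mu).
    by rewrite /K; field; rewrite ?(lt0r_neq0 mu0) ?(lt0r_neq0 c0).
  have -> : K * (1 - delta) * (lam * S) = K * (lam * S * (1 - delta)) by ring.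
  exact: ler_wpM2l.
have hb : K * (1 - delta) * (Lm * b0) <= M * (lam - 1) * Lm / 6%:R.
  have -> : M * (lam - 1) * Lm / 6%:R = K * ((cc * mu) * Lm).
    by rewrite /K; field; rewrite ?(lt0r_neq0 mu0) ?(lt0r_neq0 c0).
  have -> : K * (1 - delta) * (Lm * b0) = K * ((1 - delta) * b0 * Lm) by ring.
  apply: ler_wpM2l => //; apply: ler_wpM2r; first exact: ltW.
  by apply: le_trans (_ : cc <= _); [nra | rewrite ler_peMr // ltW].
have hM : M * (lam - 1) * Lm <= b0 * (lam - 1) * Lm.
  by apply: ler_wpM2r; [exact: ltW | apply: ler_wpM2r; rewrite // subr_ge0 ltW].
have hX : 0 <= M * (lam - 1) * Lm.
  by apply: mulr_ge0; [rewrite mulr_ge0 // subr_ge0 ltW | exact: ltW].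
rewrite mulrDr; lra.
Qed.

End RealInequalities.

Section Window.
Variable R : realFieldType.

(* The minimum of two sequences over the window of times t - L + 1, ..., t;
   r_min is the instance for the source and destination ratios. *)
Definition window_min (u v : nat -> R) (L t : nat) : R :=
  \big[Num.min/u t]_(i < L) Num.min (u (t - i)%N) (v (t - i)%N).

Lemma window_min_le (u v : nat -> R) L t i : (i < L)%N ->
  window_min u v L t <= u (t - i)%N /\ window_min u v L t <= v (t - i)%N.
Proof.
move=> hi; have := bigmin_le (u t) (Ordinal hi)
  (fun i : 'I_L => Num.min (u (t - i)%N) (v (t - i)%N)).
by rewrite le_min => /andP.
Qed.

Lemma le_window_min (u v : nat -> R) L t y : y <= u t ->
  (forall i, (i < L)%N -> y <= u (t - i)%N /\ y <= v (t - i)%N) -> y <= window_min u v L t.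
Proof.
move=> yu h; apply: le_bigmin => // i _.
by rewrite le_min; case: (h i (ltn_ord i)) => -> ->.
Qed.

Lemma window_min_growth (u v : nat -> R) (L t : nat) (g : R) :
  (0 < L)%N -> 0 <= g -> (forall k, 0 < u k /\ 0 < v k) ->
  (forall k rho, (t <= k)%N -> 0 < rho ->
     (forall tau, (k - L.-1 <= tau <= k)%N -> rho <= u tau /\ rho <= v tau) ->
     rho * (1 + g) <= u k.+1 /\ rho * (1 + g) <= v k.+1) ->
  (1 + g) * window_min u v L t <= window_min u v L (t + L).
Proof.
move=> L0 g0 pos step; set rho := window_min u v L t.
have rho0 : 0 < rho.
  rewrite /rho /window_min; elim/big_ind: _ => [|x y hx hy|i _]; first by case: (pos t).
    by rewrite lt_min hx.
  by case: (pos (t - i)%N) => hu hv; rewrite lt_min hu.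
have rho_le : rho <= rho * (1 + g) by rewrite ler_peMr ?lerDl // ltW.
have stay i : (i < L)%N -> forall tau, (t - L.-1 <= tau <= t + i)%N ->
    rho <= u tau /\ rho <= v tau.
  elim: i => [|i IH] hi tau htau.
    have hw : (t - tau < L)%N by lia.
    by rewrite -(_ : t - (t - tau) = tau)%N; [apply: window_min_le | lia].
  case: (ltnP tau (t + i.+1)) => h; first by apply: IH; lia.
  have [h1 h2] : rho * (1 + g) <= u (t + i).+1 /\ rho * (1 + g) <= v (t + i).+1.
    by apply: step rho0 _ => [|tau' h']; [lia | apply: IH; lia].
  by rewrite (_ : tau = (t + i).+1); [split; apply: le_trans rho_le _ | lia].
have grow k : (t <= k < t + L)%N -> rho * (1 + g) <= u k.+1 /\ rho * (1 + g) <= v k.+1.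
  move=> hk; apply: step rho0 _ => [|tau htau]; first lia.
  by apply: (stay L.-1); lia.
have last_step : (t + L = (t + L.-1).+1)%N by lia.
rewrite mulrC; apply: le_window_min => [|i hi].
  by have [] := grow (t + L.-1)%N; rewrite -?last_step //; lia.
have hk : (t <= (t + L - i).-1 < t + L)%N by lia.
by have := grow _ hk; rewrite (_ : (t + L - i).-1.+1 = t + L - i)%N //; lia.
Qed.

End Window.

Record exp_regime (R : realType) (V : finType) (E : rel V) (s d : V)
    (p1 p2 : seq V) (l : V -> R) (delta lambda : R)
    (p : nat -> V -> V -> R) (f b : nat -> V -> R) : Prop := ExpRegime {
  regime_paths : two_parallel_paths E s d p1 p2;
  regime_lengths : ((size p1).-1 < (size p2).-1)%N;
  regime_decay : 0 < delta < 1;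
  regime_traj : is_trajectory E s d l delta p f b;
  regime_no_leak : forall v, l v = 0;
  regime_p0 : forall u v, E u v -> 0 < p 0%N u v;
  regime_lambda : 1 < lambda;
  regime_fs0 : 0 < f 0%N s;
  regime_bd0 : 0 < b 0%N d;
  regime_fs : forall t, f t s = lambda ^+ t * f 0%N s;
  regime_bd : forall t, b t d = lambda ^+ t * b 0%N d;
  regime_f0 : forall v, v != s -> v != d -> 0 <= f 0%N v <= f 0%N s;
  regime_b0 : forall v, v != s -> v != d -> 0 <= b 0%N v <= b 0%N d }.

Lemma exp_regime_rev (R : realType) (V : finType) (E : rel V) s d p1 p2 l
    (delta lambda : R) p f b :
  exp_regime E s d p1 p2 l delta lambda p f b ->
  exp_regime (fun x y => E y x) d s (rev p1) (rev p2) l delta lambda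
    (fun t x y => p t y x) b f.
Proof.
case=> G hmn hdelta [hf hb hp] hl0 hp0 hlam hfs0 hbd0 hfs hbd hf0 hb0.
split=> //; first exact: two_parallel_paths_rev.
- by rewrite !size_rev.
- by split=> [t v hv|t u hu|t u v huv]; [exact: hb | exact: hf | rewrite hp // addrAC].
- by move=> u v /hp0.
- by move=> v hvd hvs; apply: hb0.
- by move=> v hvd hvs; apply: hf0.
Qed.

Section Regime.
Variables (R : realType) (V : finType) (E : rel V) (s d : V) (p1 p2 : seq V)
  (l : V -> R) (delta lambda : R) (p : nat -> V -> V -> R) (f b : nat -> V -> R).
Hypothesis S : exp_regime E s d p1 p2 l delta lambda p f b.
Local Notation m := (size p1).-1.
Local Notation n := (size p2).-1.
Local Notation a j := (nth s p1 j).
Local Notation c j := (nth s p2 j).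
Local Notation cc := (f 0%N s + b 0%N d).
Local Notation gain := (Num.min (f 0%N s) (b 0%N d) * (1 - delta) * (lambda - 1)
                        / (6%:R * cc * lambda ^+ m)).

(* Since 1 <= m < n, the graph is not a single edge (from either side). *)
Lemma regime_nontrivial : (1 < m)%N \/ (1 < n)%N.
Proof. by have := tpp_size (regime_paths S); have := regime_lengths S; right; lia. Qed.

Lemma regime_nontrivial' : (1 < n)%N \/ (1 < m)%N.
Proof. by case: regime_nontrivial; [right | left]. Qed.

Lemma lambda_exp_ge1 k : 1 <= lambda ^+ k.
Proof. by rewrite exprn_ege1 // ltW // (regime_lambda S). Qed.

Lemma lambda_exp_gt0 k : 0 < lambda ^+ k.
Proof. exact: lt_le_trans ltr01 (lambda_exp_ge1 k). Qed.

Lemma src_input_bound k : 0 <= f k s <= lambda ^+ k * f 0%N s.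
Proof. by rewrite (regime_fs S) lexx mulr_ge0 ?ltW ?lambda_exp_gt0 ?(regime_fs0 S). Qed.

Lemma dst_input_bound k : 0 <= b k d <= lambda ^+ k * b 0%N d.
Proof. by rewrite (regime_bd S) lexx mulr_ge0 ?ltW ?lambda_exp_gt0 ?(regime_bd0 S). Qed.

Definition branch_bounded (q : seq V) (k : nat) : Prop :=
  (forall j, (j < (size q).-1)%N -> 0 < p k (nth s q j) (nth s q j.+1)) /\
  (forall j, (0 < j < (size q).-1)%N ->
     0 <= f k (nth s q j) <= lambda ^+ k * f 0%N s /\
     0 <= b k (nth s q j) <= lambda ^+ k * b 0%N d).

Section Branch.
Variables (q q' : seq V).
Hypothesis G : two_parallel_paths E s d q q'.
Local Notation N := (size q).-1.

Lemma branch_bounded0 : branch_bounded q 0.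
Proof.
split=> j hj; first by apply: (regime_p0 S); apply: (E_branch G).
have [ns nd] := interior_ne_ends (tpp_neq G) (tpp_path G) hj.
by rewrite expr0 !mul1r; split; [apply: (regime_f0 S) | apply: (regime_b0 S)].
Qed.

Lemma branch_bounded_ends k : branch_bounded q k ->
  0 < p k s (nth s q 1) /\ 0 < p k (nth s q N.-1) d.
Proof.
move=> [hp _]; have hs := tpp_size G; split.
  by have := hp 0%N; rewrite (nth_path_first (tpp_neq G) (tpp_path G)); apply; lia.
have hN : (N.-1 < N)%N by lia.
by have := hp _ hN; rewrite (_ : N.-1.+1 = N) ?(nth_path_last (tpp_path G)) //; lia.
Qed.

End Branch.

Section BranchStep.
Variables (q q' : seq V).
Hypotheses (G : two_parallel_paths E s d q q')
  (nt : (1 < (size q).-1)%N \/ (1 < (size q').-1)%N).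
Local Notation N := (size q).-1.

Lemma branch_edge_flows k : branch_bounded q k -> branch_bounded q' k ->
  forall j, (j < N)%N ->
  0 <= fwd_edge_flow E (p k) (f k) (nth s q j) (nth s q j.+1) <= lambda ^+ k * f 0%N s /\
  0 <= bwd_edge_flow E (p k) (b k) (nth s q j) (nth s q j.+1) <= lambda ^+ k * b 0%N d.
Proof.
move=> [hp hn] bq'; have [h1 h2] := branch_bounded_ends (two_parallel_paths_sym G) bq'.
exact: (edge_flow_bounds G nt hp h1 h2 hn (src_input_bound k) (dst_input_bound k)).
Qed.

Lemma branch_bounded_step k : branch_bounded q k -> branch_bounded q' k ->
  branch_bounded q k.+1.
Proof.
move=> bq bq'; have flows := branch_edge_flows bq bq'.
have [d0 _] := andP (regime_decay S); have htr := regime_traj S.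
have hl0 := regime_no_leak S; have hs := tpp_size G.
have grow (x y : R) : 0 <= y -> x <= lambda ^+ k * y -> x <= lambda ^+ k.+1 * y.
  move=> y0 /le_trans; apply; rewrite exprS -mulrA ler_peMl ?(ltW (regime_lambda S)) //.
  by rewrite mulr_ge0 // ltW // lambda_exp_gt0.
split=> j hj.
  rewrite (pher_update G htr) //; have := bq.1 j hj.
  by case: (flows j hj) => /andP[F0 _] /andP[B0 _] P0; rewrite mulr_gt0 //; lra.
rewrite (fwd_update G nt htr hl0) // (bwd_update G htr hl0) //.
have [/andP[F0 F1] _] := flows j.-1 (ltac:(lia) : (j.-1 < N)%N).
have [_ /andP[B0 B1]] := flows j (ltac:(lia) : (j < N)%N).
have fs0 := ltW (regime_fs0 S); have bd0 := ltW (regime_bd0 S).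
by rewrite F0 B0 /=; split; apply: grow.
Qed.

End BranchStep.

Lemma regime_bounded k : branch_bounded p1 k /\ branch_bounded p2 k.
Proof.
have G := regime_paths S; have G' := two_parallel_paths_sym G.
elim: k => [|k [b1 b2]]; first by split; [exact: (branch_bounded0 G) | exact: (branch_bounded0 G')].
split; [apply: (branch_bounded_step G regime_nontrivial) |
        apply: (branch_bounded_step G' regime_nontrivial')] => //.
Qed.

Lemma regime_ends_pos k :
  [/\ 0 < p k s (a 1), 0 < p k s (c 1), 0 < p k (a m.-1) d & 0 < p k (c n.-1) d].
Proof.
have G := regime_paths S; have [b1 b2] := regime_bounded k.
have [h1 h2] := branch_bounded_ends G b1.
by have [h3 h4] := branch_bounded_ends (two_parallel_paths_sym G) b2.
Qed.

Lemma first_edge_step q q' k : two_parallel_paths E s d q q' ->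
  (1 < (size q).-1)%N \/ (1 < (size q').-1)%N ->
  branch_bounded q k -> branch_bounded q' k ->
  p k.+1 s (nth s q 1) <= delta * (p k s (nth s q 1) + cc * lambda ^+ k).
Proof.
move=> G nt bq bq'; have hs := tpp_size G; have h0 : (0 < (size q).-1)%N by lia.
have first := nth_path_first (tpp_neq G) (tpp_path G).
have := branch_edge_flows G nt bq bq' h0; rewrite first => -[/andP[_ hF] /andP[_ hB]].
rewrite -{1}first (pher_update G (regime_traj S)) // first.
by apply: ler_wpM2l; [exact: ltW (andP (regime_decay S)).1 | lra].
Qed.

Lemma src_pher_step k : p k.+1 s (a 1) + p k.+1 s (c 1) <=
  delta * (p k s (a 1) + p k s (c 1) + 2%:R * cc * lambda ^+ k).
Proof.
have G := regime_paths S; have [b1 b2] := regime_bounded k.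
have := first_edge_step G regime_nontrivial b1 b2.
have := first_edge_step (two_parallel_paths_sym G) regime_nontrivial' b2 b1.
lra.
Qed.

Lemma src_pher_bound k : (forall u v, E u v -> delta ^+ k * p 0%N u v <= cc) ->
  (p k s (a 1) + p k s (c 1)) * (1 - delta) <= 2%:R * cc * lambda ^+ k.
Proof.
move=> habs; have G := regime_paths S; have [d0 d1] := andP (regime_decay S).
have c0 : 0 < cc by rewrite addr_gt0 ?(regime_fs0 S) ?(regime_bd0 S).
have hr := decay_recursion_bound (X := fun k => p k s (a 1) + p k s (c 1))
  (regime_decay S) (ltW (regime_lambda S)) (_ : 0 <= 2%:R * cc) src_pher_step k.
rewrite /= in hr; have {}hr := hr (ltac:(lra)).
have ha : delta ^+ k * p 0%N s (a 1) <= cc by apply: habs; rewrite (E_from_src G) eqxx.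
have hc : delta ^+ k * p 0%N s (c 1) <= cc by apply: habs; rewrite (E_from_src G) eqxx orbT.
have l1 := lambda_exp_ge1 k.
have hA : delta ^+ k * (p 0%N s (a 1) + p 0%N s (c 1)) <= 2%:R * cc * lambda ^+ k by nra.
have hd : 0 <= 1 - delta by rewrite subr_ge0 ltW.
have w : delta / (1 - delta) * (1 - delta) = delta by rewrite mulfVK // subr_eq0 gt_eqF.
set X0 := delta ^+ k * _ in hr hA; set u := 2%:R * cc * lambda ^+ k in hr hA *.
have e : (X0 + u * (delta / (1 - delta))) * (1 - delta) = X0 * (1 - delta) + u * delta.
  by rewrite mulrDl -mulrA w.
have := ler_wpM2r hd hr; have := ler_wpM2r hd hA; lra.
Qed.

Lemma inflow_bound k (P X : R) : (m.-1 <= k)%N ->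
  P * (1 - delta) <= 2%:R * cc * lambda ^+ k -> 0 <= X <= lambda ^+ k * cc ->
  lambda * (P + X) * (1 - delta) <= 3%:R * cc * lambda ^+ (k - m.-1) * lambda ^+ m.
Proof.
move=> hk hP /andP[X0 Xc]; have hm := tpp_size (regime_paths S).
have [d0 d1] := andP (regime_decay S); have l1 := regime_lambda S.
rewrite -[3%:R * cc * _ * _]mulrA -exprD (_ : k - m.-1 + m = k.+1)%N; last lia.
have hX : X * (1 - delta) <= X by rewrite ler_piMr // ?gerBl ?ltW.
have lk := lambda_exp_gt0 k.
have h : (P + X) * (1 - delta) <= 3%:R * cc * lambda ^+ k by rewrite mulrDl; nra.
rewrite exprS (_ : lambda * (P + X) * (1 - delta) = lambda * ((P + X) * (1 - delta))).
  by rewrite [X in _ <= X]mulrCA ler_pM2l // (lt_trans ltr01 l1).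
by rewrite mulrA.
Qed.

Lemma gain_ge0 : 0 <= gain.
Proof.
have [d0 d1] := andP (regime_decay S); have l1 := regime_lambda S.
have c0 : 0 < cc by rewrite addr_gt0 ?(regime_fs0 S) ?(regime_bd0 S).
apply: divr_ge0; last by rewrite ltW // !mulr_gt0 // lambda_exp_gt0.
have M0 : 0 <= Num.min (f 0%N s) (b 0%N d).
  by rewrite le_min !ltW ?(regime_fs0 S) ?(regime_bd0 S).
by rewrite !mulr_ge0 // subr_ge0 ltW.
Qed.

(* The gain hypothesis of [ratio_growth] at the source: the backward input
   b_d(k - (m - 1)) arriving along the short branch pays for the gain on the
   current pheromone and forward inflow at s. *)
Lemma source_gain k : (m.-1 <= k)%N ->
  (forall u v, E u v -> delta ^+ k * p 0%N u v <= cc) ->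
  gain * (lambda * (p k s (a 1) + p k s (c 1) + f k s) + b (k - m.-1)%N d)
    <= (lambda - 1) * b (k - m.-1)%N d.
Proof.
move=> hmk habs; have c0 : 0 < cc by rewrite addr_gt0 ?(regime_fs0 S) ?(regime_bd0 S).
have hX : 0 <= f k s <= lambda ^+ k * cc.
  rewrite (andP (src_input_bound k)).1; apply: le_trans (andP (src_input_bound k)).2 _.
  by rewrite ler_pM2l ?lambda_exp_gt0 // lerDl ltW ?(regime_bd0 S).
rewrite [b (k - m.-1)%N d](regime_bd S).
apply: (gain_condition (delta := delta) (cc := cc) (M := Num.min (f 0%N s) (b 0%N d))
  (b0 := b 0%N d) (mu := lambda ^+ m)) => //.
- exact: regime_decay S.
- exact: regime_lambda S.
- by rewrite le_min !ltW ?(regime_fs0 S) ?(regime_bd0 S).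
- by rewrite ge_min lexx orbT.
- by rewrite lerDr ltW ?(regime_fs0 S).
- exact: lambda_exp_ge1.
- exact: lambda_exp_gt0.
- exact: (inflow_bound hmk (src_pher_bound habs) hX).
Qed.

(* The new
   pheromone on a source edge is delta times the old one, the forward share
   of f_s(k), and the backward flow that left d at time k - (m - 1) (on p1),
   resp. k - (n - 1) (on p2); the earlier departure on the longer path p2
   carries a smaller input, by a factor lambda at least. *)
Lemma source_ratio_step k rho : (n <= k)%N ->
  (forall u v, E u v -> delta ^+ k * p 0%N u v <= cc) -> 0 < rho ->
  (forall tau, (k - n.-1 <= tau <= k)%N ->
     rho <= r_ratio p s (a 1) (c 1) tau /\ rho <= r_ratio_d p (a m.-1) (c n.-1) d tau) ->
  rho * (1 + gain) <= r_ratio p s (a 1) (c 1) k.+1.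
Proof.
move=> hk habs r0 hw.
have G := regime_paths S; have G' := two_parallel_paths_sym G.
have nt := regime_nontrivial; have nt' := regime_nontrivial'.
have htr := regime_traj S; have hl0 := regime_no_leak S.
have hm := tpp_size G; have hn := tpp_size G'; have hmn := regime_lengths S.
have [d0 d1] := andP (regime_decay S); have l1 := regime_lambda S.
set t1 := (k - m.-1)%N; set t2 := (k - n.-1)%N.
have [hr0 _] := hw k (ltac:(lia)).
have [_ hr1] := hw t1 (ltac:(lia)).
have [_ hr2] := hw t2 (ltac:(lia)).
have t21 : (t2 < t1)%N by lia.
have hmk : (m.-1 <= k)%N by lia.
have hnk : (n.-1 <= k)%N by lia.
have cancel (x y : R) : delta * x / (delta * y) = x / y.
  by rewrite invfM mulrACA divff ?mul1r // gt_eqF.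
rewrite /r_ratio (first_edge_update G nt htr hl0 hmk) (first_edge_update G' nt' htr hl0 hnk).
rewrite cancel -/t1 -/t2 [p k s (c 1) + p k s (a 1)]addrC.
rewrite [p t2 (c n.-1) d + p t2 (a m.-1) d]addrC.
have [Pa Pc _ _] := regime_ends_pos k.
have [_ _ Q1 Q2] := regime_ends_pos t1.
have [_ _ R1 R2] := regime_ends_pos t2.
rewrite /r_ratio /r_ratio_d in hr0 hr1 hr2.
rewrite ler_pdivlMr // in hr0; rewrite ler_pdivlMr // in hr1; rewrite ler_pdivlMr // in hr2.
have [fs0 _] := andP (src_input_bound k); have [bt0 _] := andP (dst_input_bound t2).
apply: (ratio_growth (lam := lambda)) => //; first exact: gain_ge0.
  rewrite [b t1 d](regime_bd S) [b t2 d](regime_bd S) mulrA -exprS.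
  by apply: ler_wpM2r; [exact: ltW (regime_bd0 S) | rewrite ler_eXn2l].
exact: source_gain hmk habs.
Qed.

End Regime.

(* The destination ratio satisfies the same step inequality: apply
   [source_ratio_step] to the reversed regime, where d is the source, the
   reversed branches keep their lengths and the two ratios trade places. *)
Lemma dest_ratio_step (R : realType) (V : finType) (E : rel V) s d p1 p2 l
    (delta lambda : R) p f b (k : nat) (rho : R) :
  exp_regime E s d p1 p2 l delta lambda p f b ->
  let m := (size p1).-1 in let n := (size p2).-1 in
  let a j := nth s p1 j in let c j := nth s p2 j in
  (n <= k)%N ->
  (forall u v, E u v -> delta ^+ k * p 0%N u v <= f 0%N s + b 0%N d) -> 0 < rho ->
  (forall tau, (k - n.-1 <= tau <= k)%N ->
     rho <= r_ratio p s (a 1) (c 1) tau /\ rho <= r_ratio_d p (a m.-1) (c n.-1) d tau) ->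
  rho * (1 + Num.min (f 0%N s) (b 0%N d) * (1 - delta) * (lambda - 1)
             / (6%:R * (f 0%N s + b 0%N d) * lambda ^+ m))
    <= r_ratio_d p (a m.-1) (c n.-1) d k.+1.
Proof.
move=> S m n a c hk habs r0 hw.
have G := regime_paths S; have G' := two_parallel_paths_sym G.
have hm := tpp_size G; have hn := tpp_size G'.
have [hm1 hn1] : (0 < m)%N /\ (0 < n)%N by split; lia.
have e1 : nth d (rev p1) 1 = a m.-1.
  by rewrite (nth_rev_path (tpp_neq G) (tpp_path G)) -/m ?subn1.
have e2 : nth d (rev p2) 1 = c n.-1.
  by rewrite (nth_rev_path (tpp_neq G') (tpp_path G')) -/n ?subn1.
have e3 : nth d (rev p1) m.-1 = a 1.
  by rewrite (nth_rev_path (tpp_neq G) (tpp_path G)) -/m ?leq_pred //; congr nth; lia.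
have e4 : nth d (rev p2) n.-1 = c 1.
  by rewrite (nth_rev_path (tpp_neq G') (tpp_path G')) -/n ?leq_pred //; congr nth; lia.
have := source_ratio_step (exp_regime_rev S) (k := k) (rho := rho).
rewrite /r_ratio /r_ratio_d !size_rev -/m -/n e1 e2 e3 e4.
rewrite minC [b 0%N d + _]addrC; apply=> // [u v|tau htau]; first exact: habs.
by have [] := hw tau htau.
Qed.

Theorem mainTheorem14 (R : realType) (V : finType) (E : rel V) (s d : V)
    (p1 p2 : seq V) (l : V -> R) (delta lambda : R)
    (p : nat -> V -> V -> R) (f b : nat -> V -> R) :
  two_parallel_paths E s d p1 p2 ->
  let m := (size p1).-1 in
  let n := (size p2).-1 in
  let L := maxn m n in
  let s1 := nth s p1 1 in
  let s2 := nth s p2 1 in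
  let d1 := nth s p1 m.-1 in
  let d2 := nth s p2 n.-1 in
  (m < n)%N ->
  0 < delta < 1 ->
  is_trajectory E s d l delta p f b ->
  (forall v, l v = 0) ->
  (forall u v, E u v -> 0 < p 0%N u v) ->
  1 < lambda ->
  0 < f 0%N s -> 0 < b 0%N d ->
  (forall t, f t s = lambda ^+ t * f 0%N s) ->
  (forall t, b t d = lambda ^+ t * b 0%N d) ->
  (forall v, v != s -> v != d -> 0 <= f 0%N v <= f 0%N s) ->
  (forall v, v != s -> v != d -> 0 <= b 0%N v <= b 0%N d) ->
  forall t : nat,
    L%:R + T1_pos E (p 0%N) (f 0%N s) (b 0%N d) delta <= t%:R ->
    r_min p s d s1 s2 d1 d2 L (t + L) >=
      (1 + Num.min (f 0%N s) (b 0%N d) * (1 - delta) * (lambda - 1)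
           / (6%:R * (f 0%N s + b 0%N d) * lambda ^+ m))
      * r_min p s d s1 s2 d1 d2 L t.
Proof.
move=> G m n L s1 s2 d1 d2 hmn hdelta htr hl0 hp0 hlam hfs0 hbd0 hfs hbd hf0 hb0 t ht.
have S : exp_regime E s d p1 p2 l delta lambda p f b by split.
have hL : L = n by apply/maxn_idPr; exact: ltnW.
have hTt : T1_pos E (p 0%N) (f 0%N s) (b 0%N d) delta <= t%:R.
  by apply: le_trans _ ht; rewrite lerDr ler0n.
have hnt : (n <= t)%N.
  by rewrite -(ler_nat R) -hL; apply: le_trans _ ht; rewrite lerDl T1_pos_ge0.
have decayed k : (t <= k)%N -> forall u v, E u v ->
    delta ^+ k * p 0%N u v <= f 0%N s + b 0%N d.
  move=> tk u v huv; apply: (T1_pos_decay (E := E)) => //; [by rewrite addr_gt0 | exact: hp0 |].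
  by apply: le_trans hTt _; rewrite ler_nat.
rewrite hL; apply: (window_min_growth (u := r_ratio p s s1 s2) (v := r_ratio_d p d1 d2 d)).
- by have := tpp_size (two_parallel_paths_sym G); lia.
- exact: gain_ge0 S.
- by move=> k; case: (regime_ends_pos S k) => *; rewrite !divr_gt0.
- move=> k rho tk r0 hw; split.
    by apply: (source_ratio_step S) => //; [lia | exact: decayed].
  by apply: (dest_ratio_step S) => //; [lia | exact: decayed].
Qed.
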